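(* Assume Dickson's conjecture. Then there are infinitely many positive integers $n$ such that $$r(n,n)\ge \frac{9}{8}-\frac{9}{8n}.$$
   Context: $\phi$ denotes Euler's totient function. For positive integers $a,b$, $c(a,b)$ is the least positive integer $c$ such that $\phi(a!)\,\phi(b!)$ divides $\phi(c!)$, and $r(a,b)=c(a,b)/(a+b)$. Dickson's conjecture: Let $a_1,\dots,a_k$ be integers and $b_1,\dots,b_k$ positive integers. If there is no prime $q$ such that $q$ divides $\prod_{i=1}^k(a_i+b_in)$ for every $n\in\{0,1,\dots,q-1\}$, then there are infinitely many positive integers $n$ for which $a_1+b_1n,\dots,a_k+b_kn$ are all prime. *)

From mathcomp Require Import all_boot all_order all_algebra.
Set Implicit Arguments. Unset Strict Implicit. Unset Printing Implicit Defensive.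
Import Order.TTheory GRing.Theory Num.Theory.
Local Open Scope ring_scope.

Definition dickson_conjecture : Prop :=
  forall (k : nat) (a : 'I_k -> int) (b : 'I_k -> nat),
    (forall i, 0 < b i)%N ->
    ~ (exists q : nat, prime q /\
         forall n : nat, (n < q)%N ->
           (Posz q %| \prod_(i < k) (a i + Posz (b i * n)))%Z) ->
    forall N : nat, exists n : nat, (N < n)%N /\
      forall i, exists p : nat, prime p /\ a i + Posz (b i * n) = Posz p.

Definition is_c (a b c : nat) : Prop :=
  (0 < c)%N /\ (totient a`! * totient b`! %| totient c`!)%N /\
  forall c' : nat, (0 < c')%N -> (totient a`! * totient b`! %| totient c'`!)%N ->
    (c <= c')%N.

Definition r_of (a b c : nat) : rat := (c%:R / (a + b)%:R)%R.

(* Take l = 11 + 210 t with l, 2l + 1, 6l + 1, 8l + 1 all prime (Dickson), and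
   n = 8l + 1.  Since phi(c!) = prod_(2 <= j <= c) phi_factor j, the l-adic
   valuation of phi(c!) counts the j <= c with l | phi_factor j, i.e. j = kl
   (k >= 2) or j = kl + 1 prime.  For n this gives at least the ten indices
   2l, ..., 8l, 2l + 1, 6l + 1, 8l + 1, so l^20 | phi(n!)^2.  For c < 18l the
   congruence l = 11 (mod 210) leaves only kl + 1 with k in {2, 6, 8} prime,
   and j < l^2, so the valuation is at most 16 + 3 = 19.  Hence c(n, n) >= 18l,
   and 18l / 2n = 9/8 - 9/(8n). *)

From mathcomp Require Import all_boot all_order all_algebra.
From mathcomp Require Import zify ring lra.
Import Order.TTheory GRing.Theory Num.Theory.
Set Implicit Arguments. Unset Strict Implicit. Unset Printing Implicit Defensive.

Lemma prime_dvd_fact p n : prime p -> (p %| n`!) = (p <= n).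
Proof.
move=> p_pr; apply/idP/idP => [|p_le_n]; last by rewrite dvdn_fact ?prime_gt0.
elim: n => [|n IH]; first by rewrite dvdn1 => /eqP p1; rewrite p1 in p_pr.
rewrite factS Euclid_dvdM // => /orP[/(dvdn_leq (ltn0Sn n)) //|].
by move/IH/leqW.
Qed.

Lemma totient_prime_mul p n :
  prime p -> 0 < n -> p %| n -> totient (p * n) = p * totient n.
Proof.
move=> p_pr n_gt0 p_dvd_n.
have [m p_cop_m n_eq] := pfactor_coprime p_pr n_gt0.
have k_gt0 : 0 < logn p n by rewrite logn_gt0 mem_primes p_pr n_gt0 p_dvd_n.
move: n_eq k_gt0; set k := logn p n => n_eq k_gt0.
have m_cop j : coprime m (p ^ j) by apply: coprimeXr; rewrite coprime_sym.
rewrite n_eq mulnCA -expnS !totient_coprime // !totient_pfactor //.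
by rewrite -(prednK k_gt0) expnS /= [RHS]mulnCA [p * (_ * _)]mulnCA.
Qed.

Lemma totient_mul_primes m n : 0 < n ->
  (forall p, prime p -> p %| m -> p %| n) -> totient (m * n) = m * totient n.
Proof.
move=> n_gt0; elim/ltn_ind: m => m IH m_primes.
have [m_le1 | m_gt1] := leqP m 1.
  by case: m {IH m_primes} m_le1 => [|[]] // _; rewrite !mul1n.
have p_pr := pdiv_prime m_gt1; have p_dvd_m := pdiv_dvd m.
have m_eq : m = pdiv m * (m %/ pdiv m) by rewrite mulnC divnK.
have quo_gt0 : 0 < m %/ pdiv m.
  by rewrite divn_gt0 ?prime_gt0 // dvdn_leq // ltnW.
have quo_lt : m %/ pdiv m < m by rewrite ltn_Pdiv ?prime_gt1 // ltnW.
rewrite {1 2}m_eq -mulnA totient_prime_mul ?muln_gt0 ?quo_gt0 ?dvdn_mull ?m_primes //.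
rewrite IH ?mulnA // => p p_pr' p_dvd.
by apply: m_primes => //; apply: dvdn_trans p_dvd (dvdn_div p_dvd_m).
Qed.

Definition phi_factor j := if prime j then j.-1 else j.

Lemma phi_factor_gt0 j : 1 < j -> 0 < phi_factor j.
Proof. by rewrite /phi_factor; case: ifP => // _; case: j => [|[]]. Qed.

Lemma totient_factS c : 0 < c -> totient c.+1`! = phi_factor c.+1 * totient c`!.
Proof.
move=> c_gt0; rewrite factS /phi_factor; case: ifP => [c1_pr | c1_npr].
  by rewrite totient_coprime ?(totient_prime c1_pr) // prime_coprime // prime_dvd_fact // ltnn.
apply: totient_mul_primes; first exact: fact_gt0.
move=> p p_pr p_dvd; rewrite prime_dvd_fact //.
have := dvdn_leq (ltn0Sn c) p_dvd; rewrite leq_eqVlt => /predU1P[p_eq|//].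
by rewrite p_eq c1_npr in p_pr.
Qed.

Lemma totient_fact_dvd a b : a <= b -> totient a`! %| totient b`!.
Proof.
elim: b => [|b IH]; first by rewrite leqn0 => /eqP ->.
rewrite leq_eqVlt ltnS => /predU1P[-> // | a_le_b].
case: b IH a_le_b => [|b] IH; first by rewrite leqn0 => /eqP ->.
by move=> a_le_b; rewrite totient_factS // dvdn_mull // IH.
Qed.

Lemma logn_totient_fact p c :
  logn p (totient c`!) = \sum_(2 <= j < c.+1) logn p (phi_factor j).
Proof.
elim: c => [|[|c] IH]; try by rewrite big_geq //; apply: logn1.
rewrite totient_factS // lognM ?phi_factor_gt0 ?totient_gt0 ?fact_gt0 // IH.
by rewrite [in RHS]big_nat_recr //= addnC.
Qed.

Lemma is_c_exists a b : exists c, is_c a b c.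
Proof.
pose P := totient a`! * totient b`!.
(* An even m > 2 is composite, so phi(m!) = m phi((m - 1)!), and phi(a!) | m. *)
pose m := 4 * totient a`! * (maxn a b).+1.
have a_gt0 : 0 < totient a`! by rewrite totient_gt0 fact_gt0.
have m_gt3 : 3 < m by rewrite /m -mulnA leq_pmulr // muln_gt0 a_gt0.
have m_phi : phi_factor m = m.
  rewrite /phi_factor; case: ifP => // m_pr.
  have m_even : 2 %| m by rewrite /m -mulnA dvdn_mulr.
  by move: m_even => /(prime_nt_dvdP m_pr)-/(_ isT) m2; move: m_gt3; rewrite -m2.
have m_ge : (maxn a b).+1 <= m by rewrite leq_pmull // muln_gt0 a_gt0.
have P_dvd : P %| totient m`!.
  have m_eq : m = m.-1.+1 by lia.
  rewrite m_eq totient_factS -?m_eq ?m_phi; last by lia.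
  apply: dvdn_mul; first by rewrite /m -mulnA dvdn_mull // dvdn_mulr.
  by apply: totient_fact_dvd; move: m_ge (leq_maxr a b); lia.
have m_gt0 : 0 < m by apply: leq_trans m_gt3.
have [c /andP[c_gt0 P_dvd_c] c_min] :=
  ex_minnP (ex_intro (fun c => (0 < c) && (P %| totient c`!)) m (introT andP (conj m_gt0 P_dvd))).
exists c; split; [done | split; first exact: P_dvd_c].
by move=> c' c'_gt0 P_dvd_c'; apply: c_min; rewrite c'_gt0.
Qed.

Lemma logn_le_dvdn p m : prime p -> 0 < m -> m < p ^ 2 -> logn p m <= (p %| m).
Proof.
move=> p_pr m_gt0 m_lt; have [_ | p_ndvd] := boolP (p %| m).
  rewrite leqNgt -[1 < _](pfactor_dvdn 2 p_pr m_gt0).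
  by apply: contraL m_lt => /(dvdn_leq m_gt0); rewrite -leqNgt.
by rewrite leqNgt logn_gt0 mem_primes p_pr m_gt0 (negbTE p_ndvd).
Qed.

Lemma sum_le_size (T : eqType) (r s : seq T) (f : T -> nat) :
  uniq r -> (forall x, x \in r -> f x <= (x \in s)) -> \sum_(x <- r) f x <= size s.
Proof.
move=> r_uniq f_le; apply: (@leq_trans (count (mem s) r)).
  by rewrite -sum1_count [X in _ <= X]big_mkcond big_seq [X in _ <= X]big_seq; apply: leq_sum.
rewrite -size_filter uniq_leq_size ?filter_uniq // => x.
by rewrite mem_filter => /andP[].
Qed.

Lemma size_le_sum (T : eqType) (r s : seq T) (f : T -> nat) :
  uniq s -> {subset s <= r} -> (forall x, x \in s -> 0 < f x) ->
  size s <= \sum_(x <- r) f x.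
Proof.
move=> s_uniq s_r f_gt0; apply: (@leq_trans (count (mem s) r)).
  by rewrite -size_filter uniq_leq_size // => x x_s; rewrite mem_filter s_r ?andbT.
by rewrite -sum1_count big_mkcond; apply: leq_sum => x _; case: ifP => // /f_gt0.
Qed.

Lemma dvdn_phi_factor_mul k l : 1 < k -> 1 < l -> l %| phi_factor (k * l).
Proof.
move=> k_gt1 l_gt1; rewrite /phi_factor; case: ifP => [kl_pr | _]; last exact: dvdn_mull.
have l_neq1 : l != 1 by rewrite neq_ltn l_gt1 orbT.
by move: (dvdn_mull k (dvdnn l)) => /(prime_nt_dvdP kl_pr l_neq1); nia.
Qed.

Lemma dvdn_phi_factor_mul_succ k l : prime (k * l + 1) -> l %| phi_factor (k * l + 1).
Proof. by move=> kl1_pr; rewrite /phi_factor kl1_pr addn1 dvdn_mull. Qed.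

Lemma prime_mul_succ_mod210 l k :
  l %% 210 = 11 -> 0 < k < 18 -> prime (k * l + 1) -> k \in [:: 2; 6; 8].
Proof.
move=> l_mod k_bounds kl1_pr.
have small_ndvd d : 1 < d < 8 -> ~~ (d %| k * l + 1).
  move=> /andP[d_gt1 d_lt8]; have d_neq1 : d != 1 by rewrite neq_ltn d_gt1 orbT.
  by apply/negP => /(prime_nt_dvdP kl1_pr d_neq1); move: l_mod k_bounds; nia.
move: (small_ndvd 2 isT) (small_ndvd 3 isT) (small_ndvd 5 isT) (small_ndvd 7 isT).
by move: k_bounds; rewrite (divn_eq l 210) l_mod !inE; lia.
Qed.

(* Contains every j < (m + 2) l with l %| phi_factor j when l = 11 (mod 210)
   and m <= 16. *)
Definition critical_indices l m :=
  [seq k * l | k <- iota 2 m] ++ [seq k * l + 1 | k <- [:: 2; 6; 8]].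

Lemma size_critical_indices l m : size (critical_indices l m) = m + 3.
Proof. by rewrite size_cat !size_map size_iota. Qed.

Lemma critical_indices_uniq l m : 1 < l -> uniq (critical_indices l m).
Proof.
move=> l_gt1; have l_gt0 := ltnW l_gt1.
have not_mul a : a * l + 1 \notin [seq k * l | k <- iota 2 m].
  apply/mapP => -[k _ kl_eq]; have : l %| a * l + 1 by rewrite kl_eq dvdn_mull.
  by rewrite dvdn_addr ?dvdn_mull // dvdn1 => /eqP l_eq1; rewrite l_eq1 in l_gt1.
rewrite cat_uniq !map_inj_in_uniq ?iota_uniq //= ?(negbTE (not_mul _)) //.
  by move=> a b _ _ /eqP; rewrite eqn_add2r eqn_pmul2r // => /eqP.
by move=> a b _ _ /eqP; rewrite eqn_pmul2r // => /eqP.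
Qed.

Lemma phi_factor_le j : phi_factor j <= j.
Proof. by rewrite /phi_factor; case: ifP => // _; apply: leq_pred. Qed.

Section PrimeChain.

Variable l : nat.
Hypotheses (l_pr : prime l) (l_gt17 : 17 < l) (l_mod : l %% 210 = 11).
Hypotheses (pr2 : prime (2 * l + 1)) (pr6 : prime (6 * l + 1)) (pr8 : prime (8 * l + 1)).

Lemma critical_indices_phi_factor j :
  1 < j < 18 * l -> l %| phi_factor j -> j \in critical_indices l 16.
Proof.
move=> /andP[j_gt1 j_lt] /dvdnP[k]; rewrite mem_cat /phi_factor.
case: ifP => [j_pr | j_npr] kl_eq; apply/orP; [right | left]; apply/mapP; exists k.
- have j_eq : j = k * l + 1 by lia.
  apply: (prime_mul_succ_mod210 l_mod); last by rewrite -j_eq.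
  by move: j_lt; rewrite j_eq; nia.
- lia.
- have k_neq1 : k != 1 by apply: contraFneq j_npr => k1; rewrite kl_eq k1 mul1n.
  by rewrite mem_iota; move: j_lt; rewrite kl_eq; nia.
- by [].
Qed.

Lemma logn_totient_fact_le c : c < 18 * l -> logn l (totient c`!) <= 19.
Proof.
move=> c_lt; rewrite logn_totient_fact -[19]/(16 + 3) -(size_critical_indices l 16).
apply: sum_le_size => [|j]; first exact: iota_uniq.
rewrite mem_index_iota => /andP[j_gt1 j_le_c].
have j_lt : j < 18 * l by lia.
have phi_lt : phi_factor j < l ^ 2 by apply: leq_ltn_trans (phi_factor_le j) _; nia.
apply: leq_trans (logn_le_dvdn l_pr (phi_factor_gt0 j_gt1) phi_lt) _.
by case: (boolP (l %| _)) => // /(critical_indices_phi_factor _) ->; rewrite ?j_gt1.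
Qed.

Lemma logn_totient_fact_ge : 10 <= logn l (totient (8 * l + 1)`!).
Proof.
have l_gt1 := prime_gt1 l_pr.
rewrite logn_totient_fact -[10]/(7 + 3) -(size_critical_indices l 7).
apply: size_le_sum => [|j|j]; first exact: critical_indices_uniq.
- rewrite mem_cat mem_index_iota => /orP[] /mapP[k k_in ->]; move: k_in.
    by rewrite mem_iota; nia.
  by rewrite !inE => /or3P[] /eqP ->; lia.
rewrite mem_cat logn_gt0 mem_primes l_pr => /orP[] /mapP[k k_in ->].
  move: k_in; rewrite mem_iota => /andP[k_gt1 _].
  by rewrite phi_factor_gt0 ?dvdn_phi_factor_mul //; nia.
by move: k_in; rewrite !inE => /or3P[] /eqP ->;
  rewrite phi_factor_gt0 ?dvdn_phi_factor_mul_succ //; lia.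
Qed.

Lemma is_c_chain_ge c : is_c (8 * l + 1) (8 * l + 1) c -> 18 * l <= c.
Proof.
case=> _ [dvd_c _]; rewrite leqNgt; apply/negP => c_lt.
have phi_gt0 n : 0 < totient n`! by rewrite totient_gt0 fact_gt0.
have := dvdn_leq_log l (phi_gt0 c) dvd_c; rewrite lognM //.
by move: (logn_totient_fact_le c_lt) logn_totient_fact_ge; lia.
Qed.

End PrimeChain.

Lemma linear_forms_nonroot k q (a b : 'I_k -> nat) :
  prime q -> k < q -> (forall i, ~~ (q %| b i)) ->
  exists2 n, n < q & ~~ (q %| \prod_(i < k) (a i + b i * n)).
Proof.
move=> q_pr k_lt_q q_ndvd_b.
have root_uniq i n1 n2 : n1 < q -> n2 < q ->
    q %| a i + b i * n1 -> q %| a i + b i * n2 -> n1 = n2.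
  wlog n12 : n1 n2 / n1 <= n2 => [hwlog|].
    by case/orP: (leq_total n1 n2) => /hwlog hw *; [|symmetry]; apply: hw.
  move=> _ n2_lt dvd1 dvd2; apply/eqP; rewrite eqn_leq n12 -subn_eq0 /=.
  have : q %| b i * (n2 - n1) by rewrite mulnBr -(subnDl (a i)) dvdn_sub.
  rewrite Euclid_dvdM // (negbTE (q_ndvd_b i)) /=; apply: contraTT.
  by rewrite -lt0n => diff_gt0; rewrite gtnNdvd //; lia.
case: (boolP [forall n : 'I_k.+1, [exists i : 'I_k, q %| a i + b i * n]]).
  move/forallP => all_root; have /fin_all_exists [f f_root] : forall n, exists i, _ :=
    fun n => existsP (all_root n).
  have f_inj : injective f.
    move=> n1 n2 f_eq; apply: val_inj; apply: (root_uniq (f n1)); rewrite ?f_root //.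
    1,2: exact: leq_trans (ltn_ord _) k_lt_q.
    by rewrite f_eq f_root.
  by have := @leq_card _ _ f f_inj; rewrite !card_ord ltnn.
rewrite negb_forall => /existsP[n]; rewrite negb_exists => /forallP n_nonroot.
exists n; first exact: leq_trans (ltn_ord _) k_lt_q.
by rewrite Euclid_dvd_prod // big_has; apply/hasPn => i _; apply: n_nonroot.
Qed.

(* The linear forms l, 2 l + 1, 6 l + 1, 8 l + 1 in l = 11 + 210 n. *)
Definition chain_a (i : 'I_4) : nat := nth 0 [:: 11; 23; 67; 89] i.
Definition chain_b (i : 'I_4) : nat := nth 0 [:: 210; 420; 1260; 1680] i.

Lemma chain_admissible :
  ~ (exists q : nat, prime q /\ forall n : nat, (n < q)%N ->
      (Posz q %| (\prod_(i < 4) (Posz (chain_a i) + Posz (chain_b i * n)%N))%R)%Z).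
Proof.
case=> q [q_pr q_dvd].
have {}q_dvd n : n < q -> q %| \prod_(i < 4) (chain_a i + chain_b i * n).
  move=> /q_dvd; under eq_bigr do rewrite -PoszD.
  by rewrite -(big_morph Posz PoszM (erefl (Posz 1))) dvdzE.
have [q_le7 | q_gt7] := leqP q 7.
  move: (q_dvd 0 (prime_gt0 q_pr)); rewrite Euclid_dvd_prod // big_has => /hasP[i _].
  rewrite /= muln0 addn0; have [a_pr a_gt7] : prime (chain_a i) /\ 7 < chain_a i.
    by case: i => [[|[|[|[|]]]]].
  by rewrite dvdn_prime2 // => /eqP q_eq; move: q_le7; rewrite q_eq leqNgt a_gt7.
have q_ndvd_b i : ~~ (q %| chain_b i).
  have b_dvd : chain_b i %| 7`! by case: i => [[|[|[|[|]]]]].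
  by apply/negP => /dvdn_trans/(_ b_dvd); rewrite prime_dvd_fact // leqNgt q_gt7.
have [n n_lt] := linear_forms_nonroot chain_a q_pr (ltn_trans (isT : 4 < 7) q_gt7) q_ndvd_b.
by rewrite q_dvd.
Qed.

Lemma dickson_prime_chain : dickson_conjecture -> forall N, exists l,
  [/\ N < l, l %% 210 = 11 &
      [/\ prime l, prime (2 * l + 1), prime (6 * l + 1) & prime (8 * l + 1)]].
Proof.
move=> dickson N.
have b_gt0 i : 0 < chain_b i by case: i => [[|[|[|[|]]]]].
have [n [N_lt_n n_pr]] :=
  dickson 4 (fun i => Posz (chain_a i)) chain_b b_gt0 chain_admissible N.
have form_pr i : prime (chain_a i + chain_b i * n).
  by have [p [p_pr /eqP]] := n_pr i; rewrite -PoszD eqz_nat => /eqP ->.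
exists (11 + 210 * n); split; [lia | lia | split].
- exact: (form_pr (@Ordinal 4 0 isT)).
- by rewrite (_ : _ + 1 = 23 + 420 * n); [exact: (form_pr (@Ordinal 4 1 isT)) | lia].
- by rewrite (_ : _ + 1 = 67 + 1260 * n); [exact: (form_pr (@Ordinal 4 2 isT)) | lia].
- by rewrite (_ : _ + 1 = 89 + 1680 * n); [exact: (form_pr (@Ordinal 4 3 isT)) | lia].
Qed.

Section Ratio.
Local Open Scope ring_scope.

Lemma chain_ratio_bound l c : (18 * l <= c)%N ->
  (9%:R / 8%:R - 9%:R / (8 * (8 * l + 1))%N%:R : rat) <= r_of (8 * l + 1) (8 * l + 1) c.
Proof.
move=> c_ge; have l_ge0 : 0 <= (l%:R : rat) by apply: ler0n.
have -> : (9%:R / 8%:R - 9%:R / (8 * (8 * l + 1))%N%:R : rat) =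
    r_of (8 * l + 1) (8 * l + 1) (18 * l).
  by rewrite /r_of !natrM !natrD; field; rewrite lt0r_neq0 //; lra.
by rewrite /r_of ler_pM2r ?ler_nat // invr_gt0 ltr0n addn_gt0 addn1.
Qed.

End Ratio.

Theorem theorem1p4 :
  dickson_conjecture ->
  forall N : nat, exists n : nat, (N < n)%N /\
    exists c : nat, is_c n n c /\
      ((9%:R / 8%:R - 9%:R / (8 * n)%:R : rat) <= r_of n n c)%R.
Proof.
move=> dickson N.
have [l [N17_lt_l l_mod [l_pr pr2 pr6 pr8]]] := dickson_prime_chain dickson (N + 17).
have l_gt17 : 17 < l by lia.
have [c c_spec] := is_c_exists (8 * l + 1) (8 * l + 1).
exists (8 * l + 1); split; first by lia.
exists c; split=> //; apply: chain_ratio_bound.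
exact: (is_c_chain_ge l_pr l_gt17 l_mod pr2 pr6 pr8).
Qed.
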